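(* Let $M \geq 1$ be an integer and let $V = (\mathbb{Z}/2\mathbb{Z})^{F(M)}$. Then there are vectors $\xi_1,\dots,\xi_M \in V$ such that every subset of $\{\xi_1,\dots,\xi_M\}$ consisting of at least $95$ percent of them (i.e. of at least $0.95M$ of the indices) spans $V$.
   Context: For a positive integer $M$, $F(M) = M$ if $M \leq 19$ and $F(M) = \lfloor M/4 \rfloor$ if $M \geq 20$. *)

From mathcomp Require Import all_boot all_algebra.
Set Implicit Arguments. Unset Strict Implicit. Unset Printing Implicit Defensive.

Definition F (M : nat) : nat := if M <= 19 then M else M %/ 4.

From mathcomp Require Import all_boot all_algebra all_field.
From mathcomp Require Import zify.
Set Implicit Arguments. Unset Strict Implicit. Unset Printing Implicit Defensive.
Import GRing.Theory.

(* Probabilistic method, by counting.  Pick xi : I -> K^k at random, q = #|K|,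
   M = #|I|.  Some S with #|~: S| <= t fails to span iff some nonzero functional
   y and some set T of at most t indices satisfy y(xi i) = 0 for every i outside
   T; for a fixed pair (y, T) this happens with probability at most q^-(M - t).
   There are (q^k - 1) * #{T : #|T| <= t} pairs, and
   #{T : #|T| <= t} * 19^(M - t) <= 20^M, so for q = 2, k = M/4, t = M/20 the
   union bound holds as soon as 2^(M/4) * 20^M < 2^(M - t) * 19^(M - t); for
   M <= 19 we have t = 0 and the bound is trivial. *)

Lemma leq_card_bigcup (I U : finType) (P : pred I) (A : I -> {set U}) :
  #|\bigcup_(i | P i) A i| <= \sum_(i | P i) #|A i|.
Proof.
apply: (big_ind2 (fun (X : {set U}) n => #|X| <= n)) => // [|X m Y n leXm leYn].
  by rewrite cards0.
exact: leq_trans (leq_card_setU X Y) (leq_add leXm leYn).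
Qed.

Lemma exists_notin_bigcup (I U : finType) (P : pred I) (A : I -> {set U}) :
  \sum_(i | P i) #|A i| < #|U| -> exists x, forall i, P i -> x \notin A i.
Proof.
move=> small; have /subsetPn [x _ xA] : ~~ ([set: U] \subset \bigcup_(i | P i) A i).
  apply: contraTN small => /subset_leq_card; rewrite cardsT -leqNgt => cover.
  exact: leq_trans cover (leq_card_bigcup _ _).
by exists x => i Pi; apply: contra xA => xAi; apply/bigcupP; exists i.
Qed.

Lemma card_small_subsets_bound (T : finType) (t a : nat) : 0 < a ->
  #|[set A : {set T} | #|A| <= t]| * a ^ (#|T| - t) <= a.+1 ^ #|T|.
Proof.
move=> a_gt0; set n := #|T|; pose draws (j : 'I_n.+1) := [set A : {set T} | #|A| == j].
have cover : [set A : {set T} | #|A| <= t] \subset \bigcup_(j : 'I_n.+1 | j <= t) draws j.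
  apply/subsetP => A; rewrite inE => At; apply/bigcupP.
  have An : #|A| < n.+1 by rewrite ltnS max_card.
  by exists (Ordinal An); rewrite // inE.
have card_le : #|[set A : {set T} | #|A| <= t]| <= \sum_(j : 'I_n.+1 | j <= t) #|draws j|.
  exact: leq_trans (subset_leq_card cover) (leq_card_bigcup _ _).
apply: leq_trans (leq_mul card_le (leqnn _)) _.
rewrite big_distrl -[a.+1]addn1 expnDn big_mkcond /=; apply: leq_sum => j _.
case: ifP => // jt.
by rewrite card_draws exp1n muln1 leq_mul2l leq_pexp2l ?leq_sub2l ?orbT.
Qed.

(* Raising to the 20th power reduces the claim to 2^5 * 20^20 < 2^19 * 19^19. *)
Lemma expn_margin (M : nat) : 0 < M ->
  2 ^ (M %/ 4) * 20 ^ M < 2 ^ (M - M %/ 20) * 19 ^ (M - M %/ 20).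
Proof.
move=> M_gt0; set t := M %/ 20; rewrite -(@ltn_exp2r _ _ 20) // !expnMn -!expnM.
have le_lhs : 2 ^ (M %/ 4 * 20) * 20 ^ (M * 20) <= (2 ^ 5 * 20 ^ 20) ^ M.
  rewrite expnMn -!expnM [20 * M]mulnC leq_mul2r; apply/orP; right.
  by apply: leq_pexp2l => //; lia.
have lt_base : (2 ^ 5 * 20 ^ 20) ^ M < (2 ^ 19 * 19 ^ 19) ^ M.
  by rewrite ltn_exp2r; [lia | exact: M_gt0].
have le_rhs : (2 ^ 19 * 19 ^ 19) ^ M <= 2 ^ ((M - t) * 20) * 19 ^ ((M - t) * 20).
  have le_exp : 19 * M <= (M - t) * 20 by rewrite /t; lia.
  have -> : (2 ^ 19 * 19 ^ 19) ^ M = 2 ^ (19 * M) * 19 ^ (19 * M).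
    by rewrite expnMn !expnM.
  by apply: leq_mul; apply: leq_pexp2l.
exact: leq_ltn_trans le_lhs (leq_trans lt_base le_rhs).
Qed.

Lemma F2_robust_count (M : nat) : 0 < M ->
  (2 ^ F M - 1) * #|[set T : {set 'I_M} | #|T| <= M %/ 20]| < 2 ^ (M - M %/ 20).
Proof.
move=> M_gt0; rewrite /F; case: (leqP M 19) => [M_le19 | M_gt19].
  rewrite divn_small ?ltnS // subn0.
  have -> : #|[set T : {set 'I_M} | #|T| <= 0]| = 1.
    by rewrite -(cards1 (set0 : {set 'I_M})); apply: eq_card => T; rewrite !inE leqn0 cards_eq0.
  by rewrite muln1 subn1 prednK ?expn_gt0.
have := card_small_subsets_bound 'I_M (M %/ 20) (isT : 0 < 19).
rewrite card_ord => small_bound.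
rewrite -(ltn_pmul2r (_ : 0 < 19 ^ (M - M %/ 20))) ?expn_gt0 //.
apply: leq_ltn_trans (expn_margin M_gt0).
by rewrite -mulnA leq_mul ?leq_subr.
Qed.

Local Open Scope ring_scope.

Lemma card_annihilator (K : finFieldType) (k : nat) (y : 'cV[K]_k) : y != 0 ->
  (#|[set v : 'rV[K]_k | v *m y == 0%R]| * #|K| = #|K| ^ k)%N.
Proof.
move=> y_neq0; pose f : 'Hom('rV[K]_k, 'M[K]_1) := linfun (mulmxr y).
have kerE : [set v : 'rV[K]_k | v *m y == 0%R] = [set v | v \in lker f].
  by apply/setP => v; rewrite !inE memv_ker lfunE.
have [v vy_neq0] : exists v : 'rV[K]_k, v *m y != 0.
  apply/existsP; apply: contraR y_neq0 => /existsPn y_ann.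
  by apply/eqP/row_matrixP => i; rewrite rowE row0; apply/eqP/negPn/y_ann.
have img_neq0 : limg f != 0%VS.
  apply: contraNneq vy_neq0 => img0; have := memv_img f (memvf v).
  by rewrite img0 memv0 lfunE.
have dim_img : \dim (limg f) = 1%N.
  apply/eqP; rewrite eqn_leq lt0n dimv_eq0 img_neq0 andbT.
  by rewrite -[X in (_ <= X)%N]/(dim 'M[K]_1) -dimvf dimvS ?subvf.
have := limg_ker_dim f fullv; rewrite capfv dim_img dimvf dim_matrix mul1r => dim_ker.
by rewrite kerE cardsE card_vspace -[X in (_ = _ ^ X)%N]dim_ker expnD expn1.
Qed.

Lemma span_fullv_no_annihilator (F : fieldType) (k : nat) (s : seq 'rV[F]_k) :
  (forall y : 'cV[F]_k, y != 0 -> exists2 v, v \in s & v *m y != 0) ->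
  <<s>>%VS = fullv.
Proof.
move=> not_annihilated; pose A := \matrix_(i < size s) s`_i.
have A_full : row_full A.
  apply: contraT => A_not_full.
  have coker_neq0 : cokermx A != 0.
    by rewrite -mxrank_eq0 mxrank_coker subn_eq0 -ltnNge ltn_neqAle A_not_full rank_leq_col.
  have [j colj_neq0] : exists j, col j (cokermx A) != 0.
    apply/existsP; apply: contraR coker_neq0 => /existsPn colj0; apply/eqP/matrixP => i j.
    by have /eqP/matrixP/(_ i 0) := negPn (colj0 j); rewrite !mxE.
  have [v vs] := not_annihilated _ colj_neq0.
  have v_idx : (index v s < size s)%N by rewrite index_mem.
  have ->: v = row (Ordinal v_idx) A by rewrite rowK nth_index.
  by rewrite -row_mul colE mulmxA mulmx_coker mul0mx row0 eqxx.
apply/vspaceP => v; rewrite memvf; have /submxP [x ->] := submx_full v A_full.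
rewrite mulmx_sum_row; apply: memv_suml => i _; rewrite rowK memvZ // memv_span //.
exact/mem_nth/ltn_ord.
Qed.

Section RandomFamily.

Variables (K : finFieldType) (I : finType) (k : nat).
Local Notation q := #|K|.

Definition annihilated_off (y : 'cV[K]_k) (T : {set I}) : {set {ffun I -> 'rV[K]_k}} :=
  [set xi : {ffun I -> 'rV[K]_k} | [forall i in ~: T, xi i *m y == 0]].

Lemma card_annihilated_off (y : 'cV[K]_k) (T : {set I}) : y != 0 ->
  (#|annihilated_off y T| * q ^ #|~: T| = q ^ (k * #|I|))%N.
Proof.
move=> y_neq0; pose D i := if i \in T then [set: 'rV[K]_k] else [set v | v *m y == 0].
have -> : #|annihilated_off y T| = #|family (fun i => mem (D i))|.
  apply: eq_card => xi; rewrite !inE; apply/forallP/familyP => /= xiD i; have := xiD i;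
    by rewrite /D !inE; case: (i \in T); rewrite ?inE.
rewrite card_family foldrE big_map big_enum /= -prod_nat_const.
rewrite [\prod_(i in ~: T) _]big_mkcond -big_split expnM -prod_nat_const /=.
apply: eq_bigr => i _; rewrite /D inE; case: (i \in T) => /=.
  by rewrite cardsT card_mx mul1n muln1.
by rewrite card_annihilator.
Qed.

Lemma exists_nonannihilated_family (t : nat) :
  ((q ^ k - 1) * #|[set T : {set I} | (#|T| <= t)%N]| < q ^ (#|I| - t))%N ->
  exists xi : I -> 'rV[K]_k, forall y : 'cV[K]_k, y != 0 ->
    forall T : {set I}, (#|T| <= t)%N -> exists2 i, i \notin T & xi i *m y != 0.
Proof.
move=> count_small.
pose P := [set p : 'cV[K]_k * {set I} | (p.1 != 0) && (#|p.2| <= t)%N].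
have card_P : #|P| = ((q ^ k - 1) * #|[set T : {set I} | (#|T| <= t)%N]|)%N.
  have -> : P = setX [set~ 0] [set T : {set I} | (#|T| <= t)%N]%N.
    by apply/setP => -[y T]; rewrite !inE.
  by rewrite cardsX cardsC1 card_mx muln1 subn1.
have [xi xi_good] : exists xi, forall p, p \in P -> xi \notin annihilated_off p.1 p.2.
  apply: exists_notin_bigcup; have q_gt0 : (0 < q)%N by apply: ltnW (finNzRing_gt1 K).
  have qt_gt0 : (0 < q ^ (#|I| - t))%N by rewrite expn_gt0 q_gt0.
  rewrite card_ffun card_mx mul1n -expnM -(ltn_pmul2r qt_gt0) big_distrl /=.
  apply: (@leq_ltn_trans (\sum_(p in P) q ^ (k * #|I|))).
    apply: leq_sum => -[y T]; rewrite inE => /andP [/= y_neq0 T_small].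
    rewrite -(card_annihilated_off T y_neq0) leq_mul2l leq_pexp2l ?orbT //.
    by rewrite leq_subLR -(cardsC T) leq_add2r.
  by rewrite sum_nat_const card_P mulnC ltn_pmul2l ?expn_gt0 ?q_gt0.
exists xi => y y_neq0 T T_small.
have := xi_good (y, T); rewrite inE y_neq0 T_small => /(_ isT).
by rewrite inE negb_forall => /existsP [i]; rewrite negb_imply inE => /andP [iT xiy_neq0]; exists i.
Qed.

Lemma exists_robustly_spanning_family (t : nat) :
  ((q ^ k - 1) * #|[set T : {set I} | (#|T| <= t)%N]| < q ^ (#|I| - t))%N ->
  exists xi : I -> 'rV[K]_k,
    forall S : {set I}, (#|~: S| <= t)%N -> <<[seq xi i | i in S]>>%VS = fullv.
Proof.
move=> /exists_nonannihilated_family [xi xi_good]; exists xi => S S_large.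
apply: span_fullv_no_annihilator => y y_neq0.
have [i] := xi_good y y_neq0 _ S_large; rewrite inE negbK => iS xiy_neq0.
by exists (xi i); rewrite ?image_f.
Qed.

End RandomFamily.

Theorem lemma9p1 (M : nat) (hM : (1 <= M)%N) :
  exists xi : 'I_M -> 'rV['F_2]_(F M),
    forall S : {set 'I_M}, (19 * M <= 20 * #|S|)%N ->
      (<<[seq xi i | i in S]>>)%VS = fullv.
Proof.
have [xi xi_spans] : exists xi : 'I_M -> 'rV['F_2]_(F M), forall S : {set 'I_M},
    (#|~: S| <= M %/ 20)%N -> <<[seq xi i | i in S]>>%VS = fullv.
  by apply: exists_robustly_spanning_family; rewrite card_Fp // card_ord; apply: F2_robust_count.
exists xi => S S_large; apply: xi_spans.
by have := cardsC S; rewrite card_ord leq_divRL //; lia.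
Qed.
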